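(* Let $X$, $Y$ be bigraphs and $f,g:X\to Y$ bigraph homomorphisms which are $\times$-homotopic. Then for every bigraph $Z$ the graph homomorphisms $f^*, g^*: Z^Y\to Z^X$, $h\mapsto h\circ f$ and $h\mapsto h\circ g$, are $\times$-homotopic, i.e. they lie in the same connected component of $\mathrm{Hom}(Z^Y,Z^X)$.
   Context: A graph is a set $V$ with a symmetric relation $E\subset V\times V$ (loops allowed). $K_2$ has vertices $0,1$ and edges $(0,1),(1,0)$. A bigraph is a graph $X$ with a graph homomorphism $\varepsilon_X:X\to K_2$; $V_i(X)=\varepsilon_X^{-1}(i)$; bigraph homomorphisms commute with colorings. For bigraphs $X,Y$, $Y^X$ is the graph whose vertices are maps $h:V(X)\to V(Y)$ with $\varepsilon_Y\circ h=\varepsilon_X$, with $h,h'$ adjacent iff $(h(a),h'(a'))\in E(Y)$ for all $(a,a')\in E(X)$. A multi-homomorphism $\eta$ from a graph $T$ to a graph $H$ assigns to each vertex of $T$ a finite nonempty set of vertices of $H$ with $\eta(v)\times\eta(w)\subset E(H)$ whenever $(v,w)\in E(T)$; $\mathrm{Hom}(T,H)$ is the poset of these ordered by pointwise inclusion, a homomorphism $f$ being identified with $v\mapsto\{f(v)\}$. For bigraphs, $\mathrm{Hom}_{/K_2}(X,Y)$ is the subposet of those with $\eta(v)\subset V_i(Y)$ for $v\in V_i(X)$, and bigraph homomorphisms $f,g:X\to Y$ are $\times$-homotopic if they lie in the same connected component of $\mathrm{Hom}_{/K_2}(X,Y)$. *)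

(* Graphs are arbitrary (possibly infinite) types with a
   symmetric edge relation (loops allowed). *)
From Stdlib Require Import List Relations.

Record graph : Type := Graph {
  V : Type;
  E : V -> V -> Prop;
  E_sym : forall x y, E x y -> E y x }.

Definition is_graph_hom (T H : graph) (f : V T -> V H) : Prop :=
  forall v w, E T v w -> E H (f v) (f w).

(* A bigraph: a graph with a homomorphism to K_2, K_2 having vertex set
   bool (false = 0, true = 1) and edges (0,1),(1,0). *)
Record bigraph : Type := Bigraph {
  bg : graph;
  col : V bg -> bool;
  col_hom : forall x y, E bg x y -> col x <> col y }.

Definition is_bigraph_hom (X Y : bigraph) (f : V (bg X) -> V (bg Y)) : Prop :=
  is_graph_hom (bg X) (bg Y) f /\ forall a, col Y (f a) = col X a.

Definition exp_V (Y X : bigraph) : Type :=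
  { h : V (bg X) -> V (bg Y) | forall a, col Y (h a) = col X a }.

Definition exp_E (Y X : bigraph) (h h' : exp_V Y X) : Prop :=
  forall a a', E (bg X) a a' -> E (bg Y) (proj1_sig h a) (proj1_sig h' a').

Lemma exp_E_sym (Y X : bigraph) (h h' : exp_V Y X) :
  exp_E Y X h h' -> exp_E Y X h' h.
Proof.
  intros H a a' Ha. apply E_sym. apply H. apply E_sym. exact Ha.
Qed.

Definition expg (Y X : bigraph) : graph := Graph (exp_V Y X) (exp_E Y X) (exp_E_sym Y X).

Definition precomp (X Y Z : bigraph) (f : V (bg X) -> V (bg Y))
  (hf : forall a, col Y (f a) = col X a) (h : exp_V Z Y) : exp_V Z X :=
  exist (fun k : V (bg X) -> V (bg Z) => forall a, col Z (k a) = col X a) (fun a => proj1_sig h (f a))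
        (fun a => eq_trans (proj2_sig h (f a)) (hf a)).

(* Multi-homomorphisms T -> H : each vertex gets a finite nonempty set
   of vertices of H (sets represented as predicates). *)
Definition is_multihom (T H : graph) (eta : V T -> V H -> Prop) : Prop :=
  (forall v, exists l : list (V H), forall w, eta v w -> In w l) /\
  (forall v, exists w, eta v w) /\
  (forall v v', E T v v' -> forall w w', eta v w -> eta v' w' -> E H w w').

Definition is_multihom_K2 (X Y : bigraph) (eta : V (bg X) -> V (bg Y) -> Prop) : Prop :=
  is_multihom (bg X) (bg Y) eta /\
  (forall v w, eta v w -> col Y w = col X v).

Definition mh_le (A B : Type) (eta eta' : A -> B -> Prop) : Prop :=
  forall v w, eta v w -> eta' v w.

Definition single (A B : Type) (f : A -> B) : A -> B -> Prop :=
  fun v w => w = f v.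

(* Connected components of a poset P: equivalence classes of the
   reflexive-transitive closure of the comparability relation. *)
Definition Hom_step (T H : graph) (eta eta' : V T -> V H -> Prop) : Prop :=
  is_multihom T H eta /\ is_multihom T H eta' /\
  (mh_le _ _ eta eta' \/ mh_le _ _ eta' eta).

Definition same_comp_Hom (T H : graph) (f g : V T -> V H) : Prop :=
  clos_refl_trans _ (Hom_step T H) (single _ _ f) (single _ _ g).

Definition HomK2_step (X Y : bigraph) (eta eta' : V (bg X) -> V (bg Y) -> Prop) : Prop :=
  is_multihom_K2 X Y eta /\ is_multihom_K2 X Y eta' /\
  (mh_le _ _ eta eta' \/ mh_le _ _ eta' eta).

Definition times_homotopic (X Y : bigraph) (f g : V (bg X) -> V (bg Y)) : Prop :=
  clos_refl_trans _ (HomK2_step X Y) (single _ _ f) (single _ _ g).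

(* Two colour-preserving selections s, s' of one η in Hom_{/K2}(X,Y) are
   adjacent in Y^X, hence s^* and s'^* are adjacent in (Z^X)^(Z^Y), and the
   multi-homomorphism h |-> {s^* h, s'^* h} lies above both of them.
   Consecutive elements of a path in Hom_{/K2}(X,Y) are comparable, so they
   share a selection; following the path from {f} to {g} thus connects f^*
   to g^*. *)
From Stdlib Require Import List Relations IndefiniteDescription.

Definition selection (A B : Type) (eta : A -> B -> Prop) (s : A -> B) : Prop :=
  forall a, eta a (s a).

Lemma selection_exists (T H : graph) (eta : V T -> V H -> Prop) :
  is_multihom T H eta -> exists s, selection _ _ eta s.
Proof.
  intros [_ [Hne _]]. exact (functional_choice _ Hne).
Qed.

Lemma selection_mh_le (A B : Type) (eta eta' : A -> B -> Prop) (s : A -> B) :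
  mh_le _ _ eta eta' -> selection _ _ eta s -> selection _ _ eta' s.
Proof.
  intros Hle Hs a. apply Hle, Hs.
Qed.

Lemma single_multihom (T H : graph) (p : V T -> V H) :
  is_graph_hom T H p -> is_multihom T H (single _ _ p).
Proof.
  intros Hp. split; [|split].
  - intros v. exists (p v :: nil). intros w ->. now left.
  - intros v. now exists (p v).
  - intros v v' Hv w w' -> ->. now apply Hp.
Qed.

(* The last hypothesis says that [p1] and [p2] are adjacent in H^T; the
   multi-homomorphism v |-> {p1 v, p2 v} lies above both. *)
Lemma same_comp_Hom_adjacent (T H : graph) (p1 p2 : V T -> V H) :
  is_graph_hom T H p1 -> is_graph_hom T H p2 ->
  (forall v v', E T v v' -> E H (p1 v) (p2 v')) ->
  same_comp_Hom T H p1 p2.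
Proof.
  intros Hp1 Hp2 Hcross.
  set (pair := fun v w => w = p1 v \/ w = p2 v).
  assert (Hpair : is_multihom T H pair).
  { split; [|split].
    - intros v. exists (p1 v :: p2 v :: nil). intros w [-> | ->]; simpl; auto.
    - intros v. exists (p1 v). now left.
    - intros v v' Hv w w' [-> | ->] [-> | ->]; auto.
      apply E_sym, Hcross, E_sym, Hv. }
  apply rt_trans with pair; apply rt_step.
  - split; [now apply single_multihom | split; [exact Hpair |]].
    left. intros v w Hw. now left.
  - split; [exact Hpair | split; [now apply single_multihom |]].
    right. intros v w Hw. now right.
Qed.

Section Precomposition.

Variables X Y Z : bigraph.

Lemma precomp_graph_hom (s : V (bg X) -> V (bg Y)) (hs : forall a, col Y (s a) = col X a) :
  is_graph_hom (bg X) (bg Y) s ->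
  is_graph_hom (expg Z Y) (expg Z X) (precomp X Y Z s hs).
Proof.
  intros Hs h h' Hh a a' Ha. apply Hh, Hs, Ha.
Qed.

Lemma precomp_selections_adjacent (eta : V (bg X) -> V (bg Y) -> Prop)
  (s1 s2 : V (bg X) -> V (bg Y))
  (hs1 : forall a, col Y (s1 a) = col X a) (hs2 : forall a, col Y (s2 a) = col X a) :
  is_multihom (bg X) (bg Y) eta -> selection _ _ eta s1 -> selection _ _ eta s2 ->
  forall h h', exp_E Z Y h h' ->
  exp_E Z X (precomp X Y Z s1 hs1 h) (precomp X Y Z s2 hs2 h').
Proof.
  intros [_ [_ Hedge]] Hs1 Hs2 h h' Hh a a' Ha. apply Hh.
  exact (Hedge a a' Ha _ _ (Hs1 a) (Hs2 a')).
Qed.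

Lemma same_comp_precomp_selections (eta : V (bg X) -> V (bg Y) -> Prop)
  (s1 s2 : V (bg X) -> V (bg Y))
  (hs1 : forall a, col Y (s1 a) = col X a) (hs2 : forall a, col Y (s2 a) = col X a) :
  is_multihom (bg X) (bg Y) eta -> selection _ _ eta s1 -> selection _ _ eta s2 ->
  same_comp_Hom (expg Z Y) (expg Z X) (precomp X Y Z s1 hs1) (precomp X Y Z s2 hs2).
Proof.
  intros Heta Hs1 Hs2.
  apply same_comp_Hom_adjacent; intros h h';
    eapply precomp_selections_adjacent; eauto.
Qed.

Lemma same_comp_precomp_along_HomK2 (f : V (bg X) -> V (bg Y)) (hf : is_bigraph_hom X Y f)
  (eta : V (bg X) -> V (bg Y) -> Prop) :
  clos_refl_trans _ (HomK2_step X Y) (single _ _ f) eta ->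
  forall s hs, selection _ _ eta s ->
  same_comp_Hom (expg Z Y) (expg Z X) (precomp X Y Z f (proj2 hf)) (precomp X Y Z s hs).
Proof.
  intros Hpath. apply clos_rt_rtn1 in Hpath.
  induction Hpath as [| eta1 eta2 [[Heta1 Hcol1] [[Heta2 _] [Hle | Hle]]] _ IH];
    intros s hs Hs.
  - apply same_comp_precomp_selections with (single _ _ f);
      [apply single_multihom, (proj1 hf) | intros a; reflexivity | exact Hs].
  - destruct (selection_exists _ _ _ Heta1) as [s0 Hs0].
    assert (hs0 : forall a, col Y (s0 a) = col X a) by (intros a; apply Hcol1, Hs0).
    apply rt_trans with (single _ _ (precomp X Y Z s0 hs0)).
    + now apply IH.
    + apply same_comp_precomp_selections with eta2;
        [exact Heta2 | now apply selection_mh_le with eta1 | exact Hs].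
  - apply IH. now apply selection_mh_le with eta2.
Qed.

End Precomposition.

Theorem lemma3p7 (X Y : bigraph) (f g : V (bg X) -> V (bg Y))
  (hf : is_bigraph_hom X Y f) (hg : is_bigraph_hom X Y g)
  (hfg : times_homotopic X Y f g) (Z : bigraph) :
  is_graph_hom (expg Z Y) (expg Z X) (precomp X Y Z f (proj2 hf)) /\
  is_graph_hom (expg Z Y) (expg Z X) (precomp X Y Z g (proj2 hg)) /\
  same_comp_Hom (expg Z Y) (expg Z X)
    (precomp X Y Z f (proj2 hf)) (precomp X Y Z g (proj2 hg)).
Proof.
  split; [|split].
  - apply precomp_graph_hom, (proj1 hf).
  - apply precomp_graph_hom, (proj1 hg).
  - apply (same_comp_precomp_along_HomK2 X Y Z f hf (single _ _ g) hfg).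
    intros a. reflexivity.
Qed.
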